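(* Let $\mathbf{X}$ be a finitely supported real random variable with $\mathbf{E}[\mathbf{X}]=0$ and $\mathrm{Var}[\mathbf{X}]=1$, and let $\lambda$ be the minimum probability that $\mathbf{X}$ puts on any point of its support. Suppose $f:\mathbb{R}^n\to\mathbb{R}$ is a multilinear polynomial of degree at most $d\ge1$ with $\|f\|_2=1$, and let $t_0:=(2e/\lambda)^d$. Then \[ \mathbf{E}_{\mathbf{x}\sim\mathbf{X}^{\otimes n}}\big[f(\mathbf{x})^2\cdot\mathbf{1}_{\{|f(\mathbf{x})|>t_0\}}\big]\le 0.52 . \]
   Context: $\|f\|_2=\mathbf{E}_{\mathbf{x}\sim\mathbf{X}^{\otimes n}}[f(\mathbf{x})^2]^{1/2}$, where $\mathbf{X}^{\otimes n}$ is a vector of $n$ i.i.d. copies of $\mathbf{X}$. *)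

From HB Require Import structures.
From mathcomp Require Import all_boot all_order all_algebra.
From mathcomp Require Import reals sequences exp.
Set Implicit Arguments. Unset Strict Implicit. Unset Printing Implicit Defensive.
Import Order.TTheory GRing.Theory Num.Theory.
Local Open Scope ring_scope.

(* A finitely supported real random variable X is given by its support
   points a : 'I_m -> R (pairwise distinct) and the probabilities
   p : 'I_m -> R (strictly positive, summing to 1). *)

Definition rv_mean (R : realType) (m : nat) (a p : 'I_m -> R) : R :=
  \sum_(i < m) p i * a i.

Definition rv_var (R : realType) (m : nat) (a p : 'I_m -> R) : R :=
  \sum_(i < m) p i * (a i - rv_mean a p) ^+ 2.

(* Expectation of g(x) for x ~ X^{(x) n}: x_i = a (w i) independently,
   with probability prod_i p (w i). *)
Definition prod_expect (R : realType) (m n : nat) (a p : 'I_m -> R)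
  (g : ('I_n -> R) -> R) : R :=
  \sum_(w : {ffun 'I_n -> 'I_m}) (\prod_(i < n) p (w i)) * g (fun i => a (w i)).

Definition L2norm (R : realType) (m n : nat) (a p : 'I_m -> R)
  (f : ('I_n -> R) -> R) : R :=
  Num.sqrt (prod_expect a p (fun x => f x ^+ 2)).

Definition multilinear_deg_le (R : realType) (n d : nat)
  (f : ('I_n -> R) -> R) : Prop :=
  exists c : {set 'I_n} -> R,
    (forall S : {set 'I_n}, (d < #|S|)%N -> c S = 0) /\
    forall x, f x = \sum_(S : {set 'I_n}) c S * \prod_(i in S) x i.

From HB Require Import structures.
From mathcomp Require Import all_boot all_order all_algebra.
From mathcomp Require Import reals sequences exp.
From mathcomp Require Import ring lra.
From mathcomp Require boolp.
Import Order.TTheory GRing.Theory Num.Theory.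
Set Implicit Arguments. Unset Strict Implicit.
Local Open Scope ring_scope.

(* On the event |f| > t0 we have f^2 <= f^4 / t0^2, so the tail is at most
   E[f^4] / t0^2, and it suffices to bound the fourth moment.  Writing
   f = e + x_i h with e, h independent of x_i, a single coordinate gives
   E[(e + X h)^4] <= e^4 + 8 e^2 h^2 + 3 E[X^4] h^4 and E[(e + X h)^2] = e^2 + h^2;
   with Cauchy-Schwarz on the cross term, induction over the variables yields the
   Bonami-type bound E[f^4] <= K^d E[f^2]^2 whenever K >= 16 and K >= 3 E[X^4].
   Since lam X^2 <= 1 we have E[X^4] <= 1/lam, so K = 16/lam works, and the tail
   is at most (16/lam)^d / t0^2 = (4 lam / e^2)^d <= 2 / e^2 < 0.52, using that
   lam <= 1/2 because a centered variable of variance 1 has two support points. *)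

Lemma weighted_CauchySchwarz (R : realFieldType) (I : finType) (w u v : I -> R) :
  (forall i, 0 <= w i) ->
  (\sum_i w i * (u i * v i)) ^+ 2 <= (\sum_i w i * u i ^+ 2) * (\sum_i w i * v i ^+ 2).
Proof.
move=> w_ge0.
set C := \sum_i _; set A := \sum_i _; set B := \sum_i _.
have double_sum (F G : I -> R) :
    (\sum_i F i) * (\sum_j G j) = \sum_i \sum_j F i * G j.
  by rewrite big_distrl; apply: eq_bigr => i _; rewrite big_distrr.
have lagrange : A * B + B * A - 2 * (C * C)
                = \sum_i \sum_j w i * w j * (u i * v j - u j * v i) ^+ 2.
  rewrite !double_sum -big_split /= mulr_sumr -sumrB; apply: eq_bigr => i _.
  rewrite -big_split /= mulr_sumr -sumrB; apply: eq_bigr => j _; ring.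
suff : 0 <= A * B + B * A - 2 * (C * C) by lra.
rewrite lagrange; apply: sumr_ge0 => i _; apply: sumr_ge0 => j _.
by rewrite mulr_ge0 ?sqr_ge0 ?mulr_ge0.
Qed.

Lemma bonami_step_ineq (R : realFieldType) (K Q A H A4 H4 X B : R) :
  16 <= K -> 3 * B <= K -> 0 <= Q -> 0 <= A -> 0 <= H -> 0 <= A4 -> 0 <= H4 ->
  A4 <= K * Q * A ^+ 2 -> H4 <= Q * H ^+ 2 -> X ^+ 2 <= A4 * H4 ->
  A4 + 8 * X + 3 * B * H4 <= K * Q * (A + H) ^+ 2.
Proof.
move=> K16 KB Q0 A0 H0 A40 H40 A4le H4le XA4H4.
(* [16 <= K] gives [sqrt K <= K / 4], which absorbs the bound on the cross term [X]. *)
have KQAH_ge0 : 0 <= K * Q * A * H by rewrite !mulr_ge0 // (le_trans _ K16).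
have X_le : X <= K * Q * A * H / 4.
  suff : X ^+ 2 <= (K * Q * A * H / 4) ^+ 2 by nra.
  apply: (le_trans XA4H4); apply: (le_trans (ler_pM A40 H40 A4le H4le)).
  have -> : (K * Q * A * H / 4) ^+ 2 = K * (K / 16) * (Q ^+ 2 * A ^+ 2 * H ^+ 2) by field.
  have -> : K * Q * A ^+ 2 * (Q * H ^+ 2) = K * 1 * (Q ^+ 2 * A ^+ 2 * H ^+ 2) by ring.
  by apply: ler_wpM2r; [rewrite !mulr_ge0 ?sqr_ge0 | apply: ler_wpM2l; lra].
have BH4_le : 3 * B * H4 <= K * Q * H ^+ 2.
  apply: (le_trans (ler_wpM2r H40 KB)); rewrite -mulrA; apply: ler_wpM2l; lra.
nra.
Qed.

Definition set_coord (T : Type) n (y : 'I_n -> T) (i : 'I_n) (v : T) : 'I_n -> T :=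
  fun k => if k == i then v else y k.

Section Multilinear.
Variables (R : comPzRingType) (n : nat).
Implicit Types (c : {set 'I_n} -> R) (S : {set 'I_n}) (i : 'I_n).

Definition ml_eval c (y : 'I_n -> R) : R := \sum_S c S * \prod_(k in S) y k.

Definition ml_free c i S : R := if i \in S then 0 else c S.

Definition ml_deriv c i S : R := if i \in S then 0 else c (i |: S).

Definition ml_deg_le (d : nat) c := forall S, (d < #|S|)%N -> c S = 0.

Definition ml_vars_in (s : seq 'I_n) c := forall S, ~~ (S \subset [set k in s]) -> c S = 0.

Definition ml_const c := forall S, S != set0 -> c S = 0.

Lemma ml_eval_const c y : ml_const c -> ml_eval c y = c set0.
Proof.
move=> c_const; rewrite /ml_eval (bigD1 set0) //= big_set0 mulr1 big1 ?addr0 //.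
by move=> S /c_const ->; rewrite mul0r.
Qed.

Lemma ml_eval_set_coord c i y v :
  ml_eval c (set_coord y i v) = ml_eval (ml_free c i) y + v * ml_eval (ml_deriv c i) y.
Proof.
have set_coord_out S : i \notin S -> \prod_(k in S) set_coord y i v k = \prod_(k in S) y k.
  move=> iS; apply: eq_bigr => k kS; rewrite /set_coord.
  by case: eqP kS => // ->; rewrite (negbTE iS).
rewrite /ml_eval (bigID (fun S => i \in S)) /= addrC; congr (_ + _).
  rewrite [RHS](bigID (fun S => i \in S)) /= [X in _ = X + _]big1 ?add0r; last first.
    by move=> S iS; rewrite /ml_free iS mul0r.
  by apply: eq_bigr => S iS; rewrite /ml_free (negbTE iS) set_coord_out.
rewrite [in RHS](bigID (fun S => i \in S)) /= [X in _ = _ * (X + _)]big1 ?add0r; last first.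
  by move=> S iS; rewrite /ml_deriv iS mul0r.
rewrite mulr_sumr (reindex_onto (fun S => i |: S) (fun S => S :\ i)) /=; last first.
  by move=> S iS; rewrite setD1K.
apply: eq_big => [S|S /andP[_ /eqP S_i]].
  rewrite setU11; apply/eqP/idP => [<-|iS]; first by rewrite setD11.
  by rewrite setU1K.
have iS : i \notin S by rewrite -S_i setD11.
rewrite /ml_deriv (negbTE iS) big_setU1 //= set_coord_out // /set_coord eqxx.
by rewrite mulrCA.
Qed.

Lemma ml_deg_le0_const c : ml_deg_le 0 c -> ml_const c.
Proof. by move=> c0 S; rewrite -card_gt0; apply: c0. Qed.

Lemma ml_vars_in_nil_const c : ml_vars_in [::] c -> ml_const c.
Proof.
move=> c_nil S /set0Pn [k kS]; apply: c_nil; apply/subsetP => /(_ k kS).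
by rewrite inE.
Qed.

Lemma ml_vars_in_enum c : ml_vars_in (enum 'I_n) c.
Proof. by move=> S /subsetP[] k _; rewrite inE mem_enum. Qed.

Lemma ml_deg_le_free d c i : ml_deg_le d c -> ml_deg_le d (ml_free c i).
Proof. by move=> c_deg S dS; rewrite /ml_free c_deg ?if_same. Qed.

Lemma ml_deg_le_deriv d c i : ml_deg_le d.+1 c -> ml_deg_le d (ml_deriv c i).
Proof.
move=> c_deg S dS; rewrite /ml_deriv; case: ifPn => // iS.
by apply: c_deg; rewrite cardsU1 iS.
Qed.

Lemma ml_vars_in_free s c i : ml_vars_in (i :: s) c -> ml_vars_in s (ml_free c i).
Proof.
move=> c_vars S S_s; rewrite /ml_free; case: ifPn => // iS; apply: c_vars.
apply: contra S_s => /subsetP S_is; apply/subsetP => k kS.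
by move: (S_is k kS); rewrite !inE; case: eqP kS iS => // -> ->.
Qed.

Lemma ml_vars_in_deriv s c i : ml_vars_in (i :: s) c -> ml_vars_in s (ml_deriv c i).
Proof.
move=> c_vars S S_s; rewrite /ml_deriv; case: ifPn => // iS; apply: c_vars.
apply: contra S_s => /subsetP S_is; apply/subsetP => k kS.
have /S_is : k \in i |: S by rewrite in_setU1 kS orbT.
by rewrite !inE; case: eqP kS iS => // -> ->.
Qed.

End Multilinear.

Section ProductExpectation.
Variables (R : realType) (m n : nat) (a p : 'I_m -> R).
Hypothesis p_ge0 : forall j, 0 <= p j.
Hypothesis p_sum1 : \sum_j p j = 1.
Local Notation E := (@prod_expect R m n a p).
Implicit Types (g : ('I_n -> R) -> R).

Lemma eq_prod_expect g1 g2 : g1 =1 g2 -> E g1 = E g2.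
Proof. by move=> g12; apply: eq_bigr => w _; rewrite g12. Qed.

Lemma prod_expectD g1 g2 : E (fun y => g1 y + g2 y) = E g1 + E g2.
Proof. by rewrite /prod_expect -big_split; apply: eq_bigr => w _; rewrite mulrDr. Qed.

Lemma prod_expectZ k g : E (fun y => k * g y) = k * E g.
Proof. by rewrite /prod_expect mulr_sumr; apply: eq_bigr => w _; rewrite mulrCA. Qed.

Lemma prod_expect_sum (F : 'I_m -> ('I_n -> R) -> R) :
  E (fun y => \sum_j F j y) = \sum_j E (F j).
Proof. by rewrite /prod_expect exchange_big; apply: eq_bigr => w _; rewrite mulr_sumr. Qed.

Lemma ler_prod_expect g1 g2 : (forall y, g1 y <= g2 y) -> E g1 <= E g2.
Proof. by move=> g12; apply: ler_sum => w _; rewrite ler_wpM2l ?prodr_ge0. Qed.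

Lemma prod_expect_ge0 g : (forall y, 0 <= g y) -> 0 <= E g.
Proof. by move=> g0; apply: sumr_ge0 => w _; rewrite mulr_ge0 ?prodr_ge0. Qed.

Lemma prod_expect_cst k : E (fun=> k) = k.
Proof.
rewrite /prod_expect -mulr_suml mulrC.
rewrite -(bigA_distr_bigA (fun (_ : 'I_n) (j : 'I_m) => p j)) /=.
by rewrite p_sum1 big1 ?mulr1.
Qed.

Lemma prod_expect_CauchySchwarz g1 g2 :
  E (fun y => g1 y * g2 y) ^+ 2 <= E (fun y => g1 y ^+ 2) * E (fun y => g2 y ^+ 2).
Proof. by apply: weighted_CauchySchwarz => w; rewrite prodr_ge0. Qed.

Lemma prod_expect_tail_le g (t : R) : 0 < t ->
  E (fun y => if t < `|g y| then g y ^+ 2 else 0) <= t ^- 2 * E (fun y => g y ^+ 4).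
Proof.
move=> t_gt0; rewrite -prod_expectZ; apply: ler_prod_expect => y.
have g2 : g y ^+ 2 = `|g y| ^+ 2 by rewrite real_normK ?num_real.
have g4 : g y ^+ 4 = `|g y| ^+ 2 * `|g y| ^+ 2 by rewrite -g2 -exprD.
case: ifPn => [t_lt|_]; last by rewrite mulr_ge0 ?invr_ge0 ?sqr_ge0 ?exprn_even_ge0.
rewrite g4 g2 mulrCA ler_peMr ?sqr_ge0 // mulrC ler_pdivlMr ?exprn_gt0 // mul1r.
by rewrite ler_pXn2r ?nnegrE ?normr_ge0 ?(ltW t_gt0) ?(ltW t_lt).
Qed.

Lemma prod_expect_set_coord g i :
  E g = \sum_j p j * E (fun y => g (set_coord y i (a j))).
Proof.
pose upd (w : {ffun 'I_n -> 'I_m}) j : {ffun 'I_n -> 'I_m} :=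
  [ffun k => if k == i then j else w k].
have upd_at w j : upd w j i = j by rewrite ffunE eqxx.
have upd_id w : upd w (w i) = w by apply/ffunP => k; rewrite ffunE; case: eqP => // ->.
have upd_upd w j j' : upd (upd w j) j' = upd w j'.
  by apply/ffunP => k; rewrite !ffunE; case: eqP.
pose F (w : {ffun 'I_n -> 'I_m}) :=
  (\prod_(k < n | k != i) p (w k)) * g (fun k => a (w k)).
have F_upd (w : {ffun 'I_n -> 'I_m}) j :
    \prod_k p (w k) * g (set_coord (fun k => a (w k)) i (a j)) = p (w i) * F (upd w j).
  rewrite (bigD1 i) //= -mulrA /F; congr (_ * (_ * g _)).
    by apply: eq_bigr => k /negbTE ki; rewrite ffunE ki.
  by apply: boolp.funext => k; rewrite ffunE /set_coord; case: eqP => // ->.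
pose T (jw : 'I_m * {ffun 'I_n -> 'I_m}) := p jw.1 * (p (jw.2 i) * F (upd jw.2 jw.1)).
have -> : \sum_j p j * E (fun y => g (set_coord y i (a j))) = \sum_jw T jw.
  rewrite -(pair_bigA _ (fun j w => T (j, w))) /=; apply: eq_bigr => j _.
  by rewrite mulr_sumr; apply: eq_bigr => w _; rewrite F_upd.
(* Exchanging the resampled value [j] with the coordinate [w i] preserves the weights. *)
pose swap (jw : 'I_m * {ffun 'I_n -> 'I_m}) := (jw.2 i, upd jw.2 jw.1).
have swapK : involutive swap by case=> j w; rewrite /swap /= upd_at upd_upd upd_id.
rewrite (reindex_inj (inv_inj swapK)) -(pair_bigA _ (fun j w => T (swap (j, w)))) /=.
under eq_bigr do under eq_bigr do rewrite /T /= upd_at upd_upd upd_id mulrCA.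
under eq_bigr do rewrite -mulr_sumr.
rewrite -mulr_suml p_sum1 mul1r; apply: eq_bigr => w _.
by rewrite (bigD1 i) //= -mulrA.
Qed.

Lemma prod_expect_set_coord_split (F : R -> R) g e h i :
    (forall y j, g (set_coord y i (a j)) = e y + a j * h y) ->
  E (fun y => F (g y)) = E (fun y => \sum_j p j * F (e y + a j * h y)).
Proof.
move=> g_split; rewrite (prod_expect_set_coord _ i) prod_expect_sum.
by apply: eq_bigr => j _; rewrite -prod_expectZ; apply: eq_prod_expect => y; rewrite g_split.
Qed.

Hypothesis p_mean0 : \sum_j p j * a j = 0.
Hypothesis p_moment2 : \sum_j p j * a j ^+ 2 = 1.
Local Notation moment4 := (\sum_j p j * a j ^+ 4).

Lemma moment2_affine (e h : R) : \sum_j p j * (e + a j * h) ^+ 2 = e ^+ 2 + h ^+ 2.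
Proof.
have -> : e ^+ 2 + h ^+ 2 = e ^+ 2 * \sum_j p j + 2 * e * h * \sum_j p j * a j
                            + h ^+ 2 * \sum_j p j * a j ^+ 2.
  by rewrite p_sum1 p_mean0 p_moment2; ring.
by rewrite !mulr_sumr -!big_split /=; apply: eq_bigr => j _; ring.
Qed.

Lemma moment4_affine_le (e h : R) :
  \sum_j p j * (e + a j * h) ^+ 4 <= e ^+ 4 + 8 * (e ^+ 2 * h ^+ 2) + 3 * moment4 * h ^+ 4.
Proof.
have -> : e ^+ 4 + 8 * (e ^+ 2 * h ^+ 2) + 3 * moment4 * h ^+ 4 =
    e ^+ 4 * \sum_j p j + 4 * e ^+ 3 * h * \sum_j p j * a j
    + 8 * e ^+ 2 * h ^+ 2 * \sum_j p j * a j ^+ 2 + 3 * h ^+ 4 * moment4.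
  by rewrite p_sum1 p_mean0 p_moment2; ring.
rewrite !mulr_sumr -!big_split /=; apply: ler_sum => j _; rewrite -subr_ge0.
set slack := (X in 0 <= X).
have -> : slack = 2 * (p j * (a j * e * h - a j ^+ 2 * h ^+ 2) ^+ 2) by rewrite /slack; ring.
by apply: mulr_ge0; rewrite // mulr_ge0 ?sqr_ge0.
Qed.

Lemma prod_expect_sqr_split g e h i :
    (forall y j, g (set_coord y i (a j)) = e y + a j * h y) ->
  E (fun y => g y ^+ 2) = E (fun y => e y ^+ 2) + E (fun y => h y ^+ 2).
Proof.
move=> g_split; rewrite (prod_expect_set_coord_split (fun z => z ^+ 2) g_split).
by rewrite -prod_expectD; apply: eq_prod_expect => y; apply: moment2_affine.
Qed.

Lemma prod_expect_pow4_split_le g e h i :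
    (forall y j, g (set_coord y i (a j)) = e y + a j * h y) ->
  E (fun y => g y ^+ 4) <= E (fun y => e y ^+ 4) + 8 * E (fun y => e y ^+ 2 * h y ^+ 2)
                           + 3 * moment4 * E (fun y => h y ^+ 4).
Proof.
move=> g_split; rewrite (prod_expect_set_coord_split (fun z => z ^+ 4) g_split).
by rewrite -!prod_expectZ -!prod_expectD; apply: ler_prod_expect => y; apply: moment4_affine_le.
Qed.

Variable K : R.
Hypothesis K_ge16 : 16 <= K.
Hypothesis K_ge_moment4 : 3 * moment4 <= K.

Lemma ml_eval_const_bonami d c : ml_const c ->
  E (fun y => ml_eval c y ^+ 4) <= K ^+ d * E (fun y => ml_eval c y ^+ 2) ^+ 2.
Proof.
move=> c_const; have c_eval y : ml_eval c y = c set0 by apply: ml_eval_const.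
have E_pow k : E (fun y => ml_eval c y ^+ k) = c set0 ^+ k.
  by rewrite -[RHS]prod_expect_cst; apply: eq_prod_expect => y; rewrite c_eval.
rewrite !E_pow -exprM ler_peMl ?exprn_even_ge0 // exprn_ege1 //.
by apply: le_trans K_ge16; rewrite ler1n.
Qed.

Theorem ml_eval_bonami (s : seq 'I_n) d c : ml_vars_in s c -> ml_deg_le d c ->
  E (fun y => ml_eval c y ^+ 4) <= K ^+ d * E (fun y => ml_eval c y ^+ 2) ^+ 2.
Proof.
elim: s d c => [|i s IH] d c c_vars c_deg.
  by apply: ml_eval_const_bonami; apply: ml_vars_in_nil_const.
case: d c_deg => [|d] c_deg.
  by apply: ml_eval_const_bonami; apply: ml_deg_le0_const.
set e := ml_eval (ml_free c i); set h := ml_eval (ml_deriv c i).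
have c_split y j : ml_eval c (set_coord y i (a j)) = e y + a j * h y.
  exact: ml_eval_set_coord.
have IHe := IH d.+1 _ (ml_vars_in_free c_vars) (ml_deg_le_free i c_deg).
have IHh := IH d _ (ml_vars_in_deriv c_vars) (ml_deg_le_deriv i c_deg).
have pow22 (u : ('I_n -> R) -> R) : E (fun y => (u y ^+ 2) ^+ 2) = E (fun y => u y ^+ 4).
  by apply: eq_prod_expect => y; rewrite -exprM.
have CS := prod_expect_CauchySchwarz (fun y => e y ^+ 2) (fun y => h y ^+ 2).
rewrite !pow22 in CS.
rewrite (prod_expect_sqr_split c_split) exprS.
apply: le_trans (prod_expect_pow4_split_le c_split) _.
rewrite exprS in IHe; apply: bonami_step_ineq => //.
all: try by apply: prod_expect_ge0 => y; rewrite ?sqr_ge0 ?exprn_even_ge0.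
by rewrite exprn_ge0 // (le_trans _ K_ge16).
Qed.

End ProductExpectation.

Lemma rv_var_mean0 (R : realType) (m : nat) (a p : 'I_m -> R) :
  rv_mean a p = 0 -> rv_var a p = \sum_j p j * a j ^+ 2.
Proof. by rewrite /rv_var => ->; under eq_bigr do rewrite subr0. Qed.

Section StandardizedVariable.
Variables (R : realType) (m : nat) (a p : 'I_m -> R).
Hypothesis p_ge0 : forall j, 0 <= p j.
Hypothesis p_sum1 : \sum_j p j = 1.
Hypothesis p_mean0 : \sum_j p j * a j = 0.
Hypothesis p_moment2 : \sum_j p j * a j ^+ 2 = 1.
Variable lam : R.
Hypothesis lam_le : forall j, lam <= p j.

Lemma min_prob_le_half : 2 * lam <= 1.
Proof.
have [j0 _|no_index] := pickP (@predT 'I_m); last first.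
  by move: p_sum1; rewrite big_pred0 // => /eqP; rewrite eq_sym oner_eq0.
have [j j_ne|only_j0] := pickP [pred j | j != j0].
  have : p j0 + p j <= 1.
    rewrite -p_sum1 (bigD1 j0) //= (bigD1 j) //= addrA lerDl.
    by apply: sumr_ge0 => k _.
  by have := lam_le j0; have := lam_le j; lra.
have sum_at_j0 (F : 'I_m -> R) : \sum_j F j = F j0.
  rewrite (bigD1 j0) //= big1 ?addr0 // => j j_ne.
  by have := only_j0 j; rewrite /= j_ne.
move: p_sum1 p_mean0 p_moment2; rewrite !sum_at_j0 => -> /[!mul1r] ->.
by rewrite expr0n /= => /esym/eqP; rewrite oner_eq0.
Qed.

Lemma moment4_le_inv_min_prob : 0 < lam -> \sum_j p j * a j ^+ 4 <= lam^-1.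
Proof.
move=> lam_gt0; rewrite -[lam^-1]mulr1 -p_moment2 mulr_sumr; apply: ler_sum => j _.
have pa2_le1 : p j * a j ^+ 2 <= 1.
  rewrite -p_moment2 (bigD1 j) //= lerDl; apply: sumr_ge0 => k _.
  by rewrite mulr_ge0 ?sqr_ge0.
have lam_a2_le1 : lam * a j ^+ 2 <= 1.
  by apply: le_trans pa2_le1; rewrite ler_wpM2r ?sqr_ge0.
have -> : p j * a j ^+ 4 = p j * a j ^+ 2 * a j ^+ 2 by rewrite -mulrA -exprD.
rewrite [X in _ <= X]mulrC; apply: ler_wpM2l; first by rewrite mulr_ge0 ?sqr_ge0.
by rewrite -(ler_pM2l lam_gt0) mulfV ?lt0r_neq0.
Qed.

End StandardizedVariable.

Lemma tail_constant_le (R : realType) (lam : R) d :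
  0 < lam -> 2 * lam <= 1 -> (0 < d)%N ->
  ((2 * expR 1 / lam) ^+ d) ^- 2 * (16 / lam) ^+ d <= 52%:R / 100%:R.
Proof.
move=> lam_gt0 lam_half d_gt0.
have e_ge2 : 2 <= expR 1 :> R by have := expR_ge1Dx (1 : R); lra.
have -> : ((2 * expR 1 / lam) ^+ d) ^- 2 * (16 / lam) ^+ d = (4 * lam / expR 1 ^+ 2) ^+ d.
  rewrite -exprM mulnC exprM -exprVn -exprMn; congr (_ ^+ d).
  by field; rewrite lt0r_neq0 ?(lt_le_trans _ e_ge2) ?lt0r_neq0.
have r_ge0 : 0 <= 4 * lam / expR 1 ^+ 2 by rewrite divr_ge0 ?sqr_ge0 ?mulr_ge0 ?ltW.
have r_le_half : 4 * lam / expR 1 ^+ 2 <= 1 / 2.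
  by rewrite ler_pdivrMr ?exprn_gt0 ?(lt_le_trans _ e_ge2) //; nra.
apply: le_trans (ler_iXnr d_gt0 r_ge0 _) _; first by lra.
by apply: (le_trans r_le_half); lra.
Qed.

Unset Implicit Arguments. Set Strict Implicit.
Theorem corollary4p7 (R : realType) (m : nat) (a p : 'I_m -> R)
  (a_inj : injective a)
  (p_pos : forall i, 0 < p i)
  (p_sum : \sum_(i < m) p i = 1)
  (mean0 : rv_mean a p = 0)
  (var1 : rv_var a p = 1)
  (lam : R) (lam_le : forall i, lam <= p i) (lam_att : exists i, p i = lam)
  (n d : nat) (d_ge1 : (1 <= d)%N)
  (f : ('I_n -> R) -> R)
  (f_ml : multilinear_deg_le d f)
  (f_norm : L2norm a p f = 1) :
  let t0 := (2 * expR 1 / lam) ^+ d in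
  prod_expect a p (fun x => if t0 < `|f x| then f x ^+ 2 else 0)
    <= 52%:R / 100%:R.
Proof.
cbv zeta; set t0 := (2 * expR 1 / lam) ^+ d.
have p_ge0 j : 0 <= p j by apply: ltW.
have moment2 : \sum_j p j * a j ^+ 2 = 1 by rewrite -(rv_var_mean0 mean0).
have lam_gt0 : 0 < lam by have [j <-] := lam_att.
have lam_half := min_prob_le_half p_ge0 p_sum mean0 moment2 lam_le.
have [c [c_deg f_eq]] := f_ml.
have f_moment k :
    prod_expect a p (fun x => f x ^+ k) = prod_expect a p (fun x => ml_eval c x ^+ k).
  by apply: eq_prod_expect => x; rewrite f_eq.
have f_moment2 : prod_expect a p (fun x => f x ^+ 2) = 1.
  have f_moment2_ge0 : 0 <= prod_expect a p (fun x => f x ^+ 2).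
    by apply: prod_expect_ge0 => // x; apply: sqr_ge0.
  by rewrite -(sqr_sqrtr f_moment2_ge0) -[Num.sqrt _]/(L2norm a p f) f_norm expr1n.
have bonami : prod_expect a p (fun x => f x ^+ 4)
               <= (16 / lam) ^+ d * prod_expect a p (fun x => f x ^+ 2) ^+ 2.
  rewrite !f_moment; apply: ml_eval_bonami (ml_vars_in_enum c) c_deg => //.
    by rewrite ler_pdivlMr //; lra.
  have := moment4_le_inv_min_prob p_ge0 moment2 lam_le lam_gt0.
  have : 0 < lam^-1 by rewrite invr_gt0.
  lra.
have t0_gt0 : 0 < t0 by rewrite exprn_gt0 // divr_gt0 // mulr_gt0 ?expR_gt0.
apply: le_trans (prod_expect_tail_le a p_ge0 f t0_gt0) _.
rewrite f_moment2 expr1n mulr1 in bonami.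
apply: le_trans (ler_wpM2l _ bonami) _; first by rewrite invr_ge0 exprn_ge0 ?ltW.
exact: tail_constant_le.
Qed.
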